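(* Let $\mathcal{F}$ be a finite field, $n$ a positive integer not divisible by the characteristic of $\mathcal{F}$, $\omega\in\mathcal{F}$ a primitive $n$-th root of unity, and $F_n=(\omega^{jk})_{0\le j,k\le n-1}$ with rows $e_0,\dots,e_{n-1}$. Let $r$ be an integer with $\frac n2<r\le n$. Then the code generated by the $(2(n-r)+1)\times n$ matrix with rows $e_r,e_{r+1},\dots,e_{n-1},e_0,e_1,\dots,e_{n-r}$ is a linear complementary dual maximum distance separable code, with parameters $[n,\,2(n-r)+1,\,2r-n]$; its dual code is generated by the remaining rows $e_{n-r+1},\dots,e_{r-1}$.
   Context: Duals are with respect to the standard bilinear form $x\cdot y=\sum x_iy_i$. A code $\mathcal{C}$ is LCD if $\mathcal{C}\cap\mathcal{C}^\perp=0$. An $[n,k,d]$ linear code is mds if $d=n-k+1$. *)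

From HB Require Import structures.
From mathcomp Require Import all_boot all_order all_algebra all_field.
Set Implicit Arguments. Unset Strict Implicit. Unset Printing Implicit Defensive.
Import GRing.Theory.
Local Open Scope ring_scope.

(* Codes are row spaces of matrices over a field (mxalgebra, (_ <= _)%MS). *)
Section Codes.
Variable F : fieldType.
Variable n : nat.

Definition dotv (x y : 'rV[F]_n) : F := \sum_(i < n) x 0 i * y 0 i.

Definition wt (x : 'rV[F]_n) : nat := #|[set i : 'I_n | x 0 i != 0]|.

Definition in_dual m (C : 'M[F]_(m, n)) (v : 'rV[F]_n) : Prop :=
  forall u : 'rV[F]_n, (u <= C)%MS -> dotv u v = 0.

Definition is_LCD m (C : 'M[F]_(m, n)) : Prop :=
  forall v : 'rV[F]_n, (v <= C)%MS -> in_dual C v -> v = 0.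

Definition is_min_dist m (C : 'M[F]_(m, n)) (d : nat) : Prop :=
  (forall v : 'rV[F]_n, (v <= C)%MS -> v != 0 -> (d <= wt v)%N) /\
  (exists2 v : 'rV[F]_n, (v <= C)%MS /\ v != 0 & wt v = d).

Definition has_params m (C : 'M[F]_(m, n)) (k d : nat) : Prop :=
  \rank C = k /\ is_min_dist C d.

Definition is_mds m (C : 'M[F]_(m, n)) : Prop :=
  exists d, is_min_dist C d /\ d = (n - \rank C + 1)%N.
End Codes.

Definition fourier_row (F : fieldType) (n : nat) (w : F) (j : nat) : 'rV[F]_n :=
  \row_(k < n) w ^+ (j * k).

(* matrix whose rows are e_j for j in the index set S (other rows zero);
   it generates the same code as the matrix of the rows e_j, j in S. *)
Definition rows_mx (F : fieldType) (n : nat) (w : F) (S : pred nat) : 'M[F]_n :=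
  \matrix_(i < n) (if S i then fourier_row n w i else 0).

From HB Require Import structures.
From mathcomp Require Import all_boot all_order all_algebra all_field.
From mathcomp Require Import zify.
Import GRing.Theory.
Set Implicit Arguments. Unset Strict Implicit. Unset Printing Implicit Defensive.
Local Open Scope ring_scope.

(* The rows e_r, ..., e_(n-1), e_0, ..., e_(n-r) are K = 2(n-r)+1 cyclically
   consecutive rows e_r, ..., e_(r+K-1) of the Fourier matrix, and the k-th
   coordinate of x_0 e_r + ... + x_(K-1) e_(r+K-1) is w^(rk) p(w^k) with
   p = x_0 + ... + x_(K-1) X^(K-1).  A nonzero codeword thus has fewer than K
   zeros, so its weight is at least n - K + 1 = 2r - n, with equality when p
   vanishes at w^0, ..., w^(K-2).  For duality, e_i . e_j = n [n | i + j] and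
   n != 0 in F; the index set of the code is stable under j |-> -j mod n, so
   its dual is spanned by the remaining rows, and the Fourier coefficients of
   a vector in both codes vanish on both index sets. *)

Lemma dvdn_addn_ltn n i j :
  (i < n)%N -> (j < n)%N -> (n %| i + j)%N -> (i + j = 0 \/ i + j = n)%N.
Proof.
by move=> hi hj /dvdnP [[|[|q]] e]; [left | right | lia]; rewrite e ?mul0n ?mul1n.
Qed.

Lemma exists_dvdn_addn n j :
  (0 < n)%N -> (j < n)%N -> exists2 i, (i < n)%N & (n %| i + j)%N.
Proof.
move=> n_gt0 lt_jn; exists ((n - j) %% n)%N; first by rewrite ltn_mod.
by rewrite /dvdn modnDml subnK ?modnn // ltnW.
Qed.

Lemma card_ord_ltn n m : (m <= n)%N -> #|[set k : 'I_n | (k < m)%N]| = m.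
Proof.
move=> le_mn; have widen_inj : injective (widen_ord le_mn).
  by move=> a b /(congr1 val) /= /val_inj.
suff -> : [set k : 'I_n | (k < m)%N] = widen_ord le_mn @: setT.
  by rewrite card_imset // cardsT card_ord.
apply/setP => k; rewrite inE; apply/idP/imsetP => [lt_km | [j _ ->]].
  by exists (Ordinal lt_km); rewrite ?inE //; apply: val_inj.
exact: (ltn_ord j).
Qed.

Section Weight.
Variables (F : fieldType) (n : nat).

Lemma dotvC (u v : 'rV[F]_n) : dotv u v = dotv v u.
Proof. by apply: eq_bigr => k _; rewrite mulrC. Qed.

Lemma dotv0 (u : 'rV[F]_n) : dotv u 0 = 0.
Proof. by rewrite /dotv big1 // => k _; rewrite mxE mulr0. Qed.

Lemma dotv_mulmxr (u : 'rV[F]_n) m (x : 'rV[F]_m) (A : 'M_(m, n)) :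
  dotv u (x *m A) = \sum_(j < m) x 0 j * dotv u (row j A).
Proof.
rewrite /dotv; under eq_bigr do rewrite mxE mulr_sumr.
rewrite exchange_big /=; apply: eq_bigr => j _; rewrite mulr_sumr.
by apply: eq_bigr => k _; rewrite !mxE mulrCA.
Qed.

Definition zeros (v : 'rV[F]_n) : {set 'I_n} := [set k | v 0 k == 0].

Lemma zeros0 : zeros 0 = [set: 'I_n].
Proof. by apply/setP => k; rewrite !inE mxE eqxx. Qed.

Lemma card_zeros_addn_wt (v : 'rV[F]_n) : (#|zeros v| + wt v)%N = n.
Proof.
rewrite /wt -[RHS](card_ord n) -(cardsC (zeros v)).
by congr (_ + _); apply: eq_card => i; rewrite !inE.
Qed.

Lemma eqmx_min_dist m1 m2 (A : 'M[F]_(m1, n)) (B : 'M[F]_(m2, n)) d :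
  (A :=: B)%MS -> is_min_dist A d -> is_min_dist B d.
Proof.
move=> eqAB [lb [v [vA v_neq0] wt_v]]; split=> [u|].
  by rewrite -eqAB; apply: lb.
by exists v; rewrite -?eqAB.
Qed.

End Weight.

Section FourierRows.
Variables (F : fieldType) (n : nat) (w : F).
Hypothesis hw : n.-primitive_root w.
Local Notation E := (fourier_row n w).

Lemma prim_root_neq0 : w != 0.
Proof. by rewrite (prim_root_eq0 hw) -lt0n (prim_order_gt0 hw). Qed.

Lemma fourier_rowDn j : E (j + n) = E j.
Proof.
apply/rowP => k; rewrite !mxE mulnDl exprD (exprM w n) (prim_expr_order hw).
by rewrite expr1n mulr1.
Qed.

Lemma dotv_fourier_row i j :
  dotv (E i) (E j) = if (n %| i + j)%N then n%:R else 0.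
Proof.
rewrite /dotv (eq_bigr (fun k : 'I_n => (w ^+ (i + j)) ^+ k)); last first.
  by move=> k _; rewrite !mxE -exprD -mulnDl exprM.
rewrite (prim_order_dvd hw); case: ifP => [/eqP -> | w_ij_neq1].
  by under eq_bigr do rewrite expr1n; rewrite sumr_const card_ord.
have := subrX1 (w ^+ (i + j)) n.
rewrite -exprM mulnC exprM (prim_expr_order hw) expr1n subrr => /esym/eqP.
by rewrite mulf_eq0 subr_eq0 w_ij_neq1 => /eqP.
Qed.

Definition fourier_rows K s : 'M[F]_(K, n) := \matrix_(i < K) E (s + i).

Lemma fourier_rows_mulE K s (x : 'rV[F]_K) (k : 'I_n) :
  (x *m fourier_rows K s) 0 k = w ^+ (s * k) * (rVpoly x).[w ^+ k].
Proof.
rewrite !mxE horner_poly mulr_sumr; apply: eq_bigr => i _.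
by rewrite valK !mxE mulrCA -exprM -exprD; congr (_ * (_ ^+ _)); lia.
Qed.

Lemma uniq_prim_root_exps (Z : {set 'I_n}) : uniq [seq w ^+ val k | k <- enum Z].
Proof.
rewrite map_inj_in_uniq ?enum_uniq // => a b _ _ /eqP.
by rewrite (eq_prim_root_expr hw) !modn_small ?ltn_ord // => /eqP/val_inj.
Qed.

(* The [k]-th coordinate of [x *m fourier_rows K s] vanishes exactly when
   [w ^+ k] is a root of [rVpoly x], a polynomial of size at most [K]. *)
Lemma card_zeros_fourier_rows K s (x : 'rV[F]_K) : x != 0 ->
  (#|zeros (x *m fourier_rows K s)| < K)%N.
Proof.
move=> x_neq0; have {}x_neq0 : rVpoly x != 0.
  by apply: contra_neq x_neq0 => rVx0; rewrite -[x]rVpolyK rVx0 linear0.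
apply: leq_trans (size_poly _ _).
rewrite cardE -(size_map (fun k : 'I_n => w ^+ k)).
apply: max_poly_roots x_neq0 _ (uniq_prim_root_exps _).
apply/allP => z /mapP [k]; rewrite mem_enum inE fourier_rows_mulE => + ->.
by rewrite mulf_eq0 expf_eq0 (negbTE prim_root_neq0) andbF.
Qed.

Lemma fourier_rows_free K s : (K <= n)%N -> row_free (fourier_rows K s).
Proof.
move=> le_Kn; apply: inj_row_free => x x0; apply/eqP.
apply: contraLR le_Kn; rewrite -ltnNge => x_neq0.
by have := card_zeros_fourier_rows s x_neq0; rewrite x0 zeros0 cardsT card_ord.
Qed.

Lemma fourier_rows_min_dist K s :
  (0 < K <= n)%N -> is_min_dist (fourier_rows K s) (n - K + 1).
Proof.
case/andP=> K_gt0 le_Kn; split=> [v /submxP [x ->] v_neq0 | ].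
  have x_neq0 : x != 0 by apply: contra_neq v_neq0 => ->; rewrite mul0mx.
  have := card_zeros_fourier_rows s x_neq0.
  have := card_zeros_addn_wt (x *m fourier_rows K s); lia.
pose roots := [seq w ^+ i | i <- iota 0 K.-1].
pose x : 'rV[F]_K := poly_rV (\prod_(z <- roots) ('X - z%:P)).
have zeros_x : zeros (x *m fourier_rows K s) = [set k : 'I_n | (k < K.-1)%N].
  apply/setP => k; rewrite !inE fourier_rows_mulE poly_rV_K; last first.
    by rewrite size_prod_XsubC size_map size_iota prednK.
  rewrite mulf_eq0 expf_eq0 (negbTE prim_root_neq0) andbF /= -/(root _ _) root_prod_XsubC.
  apply/mapP/idP => [[i] | lt_k]; last by exists (val k); rewrite // mem_iota.
  rewrite mem_iota add0n => /andP [_ lt_i] /eqP.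
  by rewrite (eq_prim_root_expr hw) !modn_small ?ltn_ord //; [move/eqP-> | lia].
exists (x *m fourier_rows K s); last first.
  by have := card_zeros_addn_wt (x *m fourier_rows K s); rewrite zeros_x card_ord_ltn; lia.
split; first exact: submxMl.
apply/eqP => x0; have := card_ord_ltn (leq_trans (leq_pred K) le_Kn).
by rewrite -zeros_x x0 zeros0 cardsT card_ord; lia.
Qed.

Lemma fourier_row_sub_rows_mx (P : pred nat) j :
  (j < n)%N -> P j -> (E j <= rows_mx n w P)%MS.
Proof.
by move=> lt_jn Pj; have := row_sub (Ordinal lt_jn) (rows_mx n w P); rewrite rowK /= Pj.
Qed.

Lemma eq_rows_mx (P Q : pred nat) :
  (forall j, (j < n)%N -> P j = Q j) -> rows_mx n w P = rows_mx n w Q.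
Proof. by move=> eqPQ; apply/row_matrixP => j; rewrite !rowK eqPQ. Qed.

(* The hypothesis on [P] says that [P] is the cyclic interval
   [s, s + K) modulo [n]. *)
Lemma rows_mx_cyclic_interval (P : pred nat) K s :
  (K <= n)%N -> (s <= n)%N ->
  (forall j, (j < n)%N -> P j = (s <= j < s + K)%N || (j + n < s + K)%N) ->
  (rows_mx n w P :=: fourier_rows K s)%MS.
Proof.
move=> le_Kn le_sn defP; apply/eqmxP/andP; split; apply/row_subP => i; rewrite rowK.
  case: ifP => [Pi | _]; last exact: sub0mx.
  have lt_in := ltn_ord i; move: Pi; rewrite defP //.
  have [le_si /= Pi | lt_is /= Pi] := leqP s i.
    have lt_jK : (i - s < K)%N by lia.
    by have := row_sub (Ordinal lt_jK) (fourier_rows K s); rewrite rowK subnKC.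
  have lt_jK : (i + n - s < K)%N by lia.
  have := row_sub (Ordinal lt_jK) (fourier_rows K s); rewrite rowK /=.
  have -> : (s + (i + n - s) = i + n)%N by lia.
  by rewrite fourier_rowDn.
have lt_iK := ltn_ord i; have [lt_sin | le_nsi] := ltnP (s + i) n.
  by apply: fourier_row_sub_rows_mx; rewrite // defP //; lia.
have -> : (s + i = (s + i - n) + n)%N by lia.
by rewrite fourier_rowDn; apply: fourier_row_sub_rows_mx; rewrite ?defP; lia.
Qed.

Local Notation M := (fourier_rows n 0).

Lemma fourier_mx_unit : M \in unitmx.
Proof. by rewrite -row_free_unit fourier_rows_free. Qed.

Definition fourier_coef (v : 'rV[F]_n) : 'rV[F]_n := v *m invmx M.

Lemma fourier_coefK v : fourier_coef v *m M = v.
Proof. by rewrite mulmxKV ?fourier_mx_unit. Qed.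

Lemma rows_mx_diag (P : pred nat) :
  rows_mx n w P = diag_mx (\row_j (P j)%:R) *m M.
Proof.
apply/matrixP => i k; rewrite mul_diag_mx !mxE add0n.
by case: (P i); rewrite ?mul1r ?mul0r ?mxE.
Qed.

Lemma sub_rows_mxP (P : pred nat) v :
  (v <= rows_mx n w P)%MS <-> (forall j : 'I_n, ~~ P j -> fourier_coef v 0 j = 0).
Proof.
rewrite rows_mx_diag; split=> [/submxP [x ->] j nPj | coef0].
  rewrite /fourier_coef mulmxA mulmxK ?fourier_mx_unit // mul_mx_diag !mxE.
  by rewrite (negbTE nPj) mulr0.
apply/submxP; exists (fourier_coef v); rewrite mulmxA -{1}[v]fourier_coefK.
congr (_ *m _); apply/rowP => j; rewrite mul_mx_diag [RHS]mxE [X in _ * X]mxE.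
by case: (boolP (P j)) => [_ | /coef0 ->]; rewrite ?mulr1 ?mul0r.
Qed.

Lemma dotv_fourier_row_coef v i (j : 'I_n) :
  (i < n)%N -> (n %| i + j)%N -> dotv (E i) v = n%:R * fourier_coef v 0 j.
Proof.
move=> lt_in dvd_ij; rewrite -{1}[v]fourier_coefK dotv_mulmxr (bigD1 j) //=.
rewrite big1 => [|k neq_kj]; first by rewrite addr0 rowK add0n dotv_fourier_row dvd_ij mulrC.
rewrite rowK add0n dotv_fourier_row; case: ifP => [dvd_ik | _]; last by rewrite mulr0.
suff ekj : k = j by rewrite ekj eqxx in neq_kj.
apply: val_inj.
have := dvdn_addn_ltn lt_in (ltn_ord k) dvd_ik; have := dvdn_addn_ltn lt_in (ltn_ord j) dvd_ij.
have := ltn_ord k; have := ltn_ord j; rewrite /=; lia.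
Qed.

Section NegationStable.
Variable P : pred nat.
Hypothesis P_neg :
  forall i j, (i < n)%N -> (j < n)%N -> (n %| i + j)%N -> P i = P j.

Lemma in_dual_rows_mxP v :
  in_dual (rows_mx n w P) v <-> (forall j : 'I_n, P j -> fourier_coef v 0 j = 0).
Proof.
split=> [dual_v j Pj | coef0 u /submxP [x ->]].
  have [i lt_in dvd_ij] := exists_dvdn_addn (prim_order_gt0 hw) (ltn_ord j).
  have Pi : P i by rewrite (P_neg lt_in (ltn_ord j) dvd_ij).
  have := dual_v _ (fourier_row_sub_rows_mx lt_in Pi).
  rewrite (dotv_fourier_row_coef _ lt_in dvd_ij) => /eqP.
  by rewrite mulf_eq0 (negbTE (prim_root_natf_neq0 hw)) => /eqP.
rewrite dotvC dotv_mulmxr big1 // => i _; rewrite rowK.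
case: ifP => [Pi | _]; last by rewrite dotv0 mulr0.
have [j lt_jn] := exists_dvdn_addn (prim_order_gt0 hw) (ltn_ord i).
rewrite addnC => dvd_ij; rewrite dotvC (@dotv_fourier_row_coef v i (Ordinal lt_jn)) //.
by rewrite coef0 ?mulr0 // -(P_neg (ltn_ord i) lt_jn dvd_ij).
Qed.

Lemma in_dual_rows_mx v :
  in_dual (rows_mx n w P) v <-> (v <= rows_mx n w (fun j => ~~ P j))%MS.
Proof.
split=> [/in_dual_rows_mxP coef0 | /sub_rows_mxP coef0].
  by apply/sub_rows_mxP => j; rewrite negbK; apply: coef0.
by apply/in_dual_rows_mxP => j Pj; apply: coef0; rewrite Pj.
Qed.

Lemma rows_mx_LCD : is_LCD (rows_mx n w P).
Proof.
move=> v /sub_rows_mxP coef_offP /in_dual_rows_mxP coef_onP.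
rewrite -[v]fourier_coefK; suff -> : fourier_coef v = 0 by rewrite mul0mx.
by apply/rowP => j; rewrite [RHS]mxE; case: (boolP (P j)) => [/coef_onP | /coef_offP].
Qed.

End NegationStable.

End FourierRows.

Theorem mainTheorem9 (F : finFieldType) (n : nat) (w : F) (r : nat)
  (hn : (0 < n)%N)
  (hchar : forall p : nat, p \in [pchar F] -> ~~ (p %| n)%N)
  (hw : n.-primitive_root w)
  (hr1 : (n < 2 * r)%N) (hr2 : (r <= n)%N) :
  let G := rows_mx n w (fun j => (r <= j < n)%N || (j <= n - r)%N) in
  let H := rows_mx n w (fun j => (n - r < j < r)%N) in
  [/\ is_LCD G, is_mds G,
      has_params G (2 * (n - r) + 1) (2 * r - n)
    & forall v : 'rV[F]_n, in_dual G v <-> (v <= H)%MS].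
Proof.
move=> G H; set K := (2 * (n - r) + 1)%N.
pose PG : pred nat := fun j => ((r <= j < n) || (j <= n - r))%N.
have PG_neg i j : (i < n)%N -> (j < n)%N -> (n %| i + j)%N -> PG i = PG j.
  by move=> lt_in lt_jn /(dvdn_addn_ltn lt_in lt_jn); rewrite /PG; lia.
have eqG : (G :=: fourier_rows n w K r)%MS.
  by apply: (rows_mx_cyclic_interval hw) => [||j lt_jn]; lia.
have rankG : \rank G = K by rewrite eqG; apply/eqP/fourier_rows_free => //; lia.
have distG : is_min_dist G (2 * r - n).
  have -> : (2 * r - n = n - K + 1)%N by lia.
  by apply: eqmx_min_dist (eqmx_sym eqG) (fourier_rows_min_dist _ _ _) => //; lia.
split.
- have := rows_mx_LCD hw PG_neg; exact.
- by exists (2 * r - n)%N; rewrite rankG; split; last lia.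
- by split.
- suff -> : H = rows_mx n w (fun j => ~~ PG j).
    by move=> v; exact: (in_dual_rows_mx hw PG_neg v).
  by apply: eq_rows_mx => j lt_jn; rewrite /PG; lia.
Qed.
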